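(* Let $Q=(q_n)_{n\ge1}$ be a basic sequence that is infinite in limit. Then the set $\Theta_Q$ is nowhere dense.
   Context: A basic sequence is a sequence $Q=(q_n)_{n\ge1}$ of integers with $q_n\ge 2$; it is infinite in limit if $q_n\to\infty$. $\mathbb{N}$ denotes the positive integers. For each positive integer $j$ let $\nu_j=\min\{N : q_m\ge 2j^2 \text{ for all } m\ge N\}$. Define $l_1=\max(\nu_2-1,1)$ and, recursively for $i\ge 2$, $l_i=\max\big(\min\{k\in\mathbb{N} : l_1+2l_2+\cdots+(i-1)l_{i-1}+ik\ge \nu_{i+1}-1\},1\big)$. Put $L_i=\sum_{j=1}^i jl_j$ (with $L_0=0$). Let $S_Q=\{(a,b,c)\in\mathbb{N}^3 : b\le l_a,\ c\le a\}$ and $\phi_Q(a,b,c)=L_{a-1}+(b-1)a+c$; $\phi_Q$ is a bijection $S_Q\to\mathbb{N}$. A $Q$-special sequence is a family of integers $F=(F_{(a,b,c)})_{(a,b,c)\in S_Q}$ with $F_{(a,b,1)}=0$ for all $(a,b,1)\in S_Q$ and $\frac{F_{(a,b,c)}}{q_{\phi_Q(a,b,c)}}\in\left[\frac{c-1}{a}-\frac{1}{2a^2},\frac{c-1}{a}+\frac{1}{2a^2}\right]$ for $(a,b,c)\in S_Q$ with $c>1$. Let $\Gamma_Q$ be the set of $Q$-special sequences. For $F\in\Gamma_Q$ put $E_{F,n}=F_{\phi_Q^{-1}(n)}$ and $x_F=\sum_{n=1}^\infty \frac{E_{F,n}}{q_1q_2\cdots q_n}$. Define $\Theta_Q=\{x_F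 : F\in\Gamma_Q\}\subseteq[0,1)$. *)

From HB Require Import structures.
From mathcomp Require Import all_boot all_order all_algebra.
From mathcomp Require Import all_classical all_reals all_analysis.
From mathcomp Require Import zify.
Set Implicit Arguments. Unset Strict Implicit. Unset Printing Implicit Defensive.
Import Order.TTheory GRing.Theory Num.Theory.
Import numFieldTopology.Exports numFieldNormedType.Exports.

(* A sequence Q = (q_n)_{n>=1} is a function q : nat -> nat; q 0 is ignored. *)
Definition basic_seq (q : nat -> nat) : Prop := forall n, (1 <= n)%N -> (2 <= q n)%N.
Definition infinite_in_limit (q : nat -> nat) : Prop :=
  forall M : nat, exists N : nat, forall n, (N <= n)%N -> (M <= q n)%N.

(* nu_j = min {N in N_{>=1} : forall m >= N, q_m >= 2 j^2}  (0 if no such N). *)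
Definition nu_pred (q : nat -> nat) (j N : nat) : Prop :=
  (1 <= N)%N /\ forall m, (N <= m)%N -> (2 * j ^ 2 <= q m)%N.

Definition nu (q : nat -> nat) (j : nat) : nat :=
  match pselect (exists N, nu_pred q j N) with
  | left h =>
      @ex_minn (fun N => `[< nu_pred q j N >])
        (let: ex_intro N hN := h in ex_intro _ N (asboolT hN))
  | right _ => 0%N
  end.

Lemma lnext_ex (i Lp t : nat) : exists k, (0 < k)%N && (t - 1 <= Lp + i.+1 * k)%N.
Proof. exists t.+1; apply/andP; split => //; nia. Qed.

Definition lnext (i Lp t : nat) : nat := maxn (ex_minn (lnext_ex i Lp t)) 1.

(* L_i = sum_{j<=i} j l_j, with l_1 = max(nu_2 - 1, 1) and
   l_i = max(min{k : L_{i-1} + i k >= nu_{i+1} - 1}, 1) for i >= 2. *)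
Fixpoint LL (q : nat -> nat) (i : nat) : nat :=
  match i with
  | 0 => 0%N
  | i'.+1 =>
      let l := if i' is 0 then maxn (nu q 2 - 1) 1
               else lnext i' (LL q i') (nu q i'.+2) in
      (LL q i' + i'.+1 * l)%N
  end.

Definition ll (q : nat -> nat) (i : nat) : nat :=
  match i with
  | 0 => 0%N
  | 1 => maxn (nu q 2 - 1) 1
  | i'.+1 => lnext i' (LL q i') (nu q i'.+2)
  end.

Definition S_Q (q : nat -> nat) : set (nat * nat * nat) :=
  [set t | let: (a, b, c) := t in
     [/\ (1 <= a)%N, (1 <= b)%N, (b <= ll q a)%N, (1 <= c)%N & (c <= a)%N]].

Definition phi_Q (q : nat -> nat) (t : nat * nat * nat) : nat :=
  let: (a, b, c) := t in (LL q a.-1 + b.-1 * a + c)%N.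

(* phi_Q^{-1} (phi_Q is a bijection S_Q -> N_{>=1}) *)
Definition phi_Q_inv (q : nat -> nat) (n : nat) : nat * nat * nat :=
  xget (0%N, 0%N, 0%N) [set t | S_Q q t /\ phi_Q q t = n].

Local Open Scope ring_scope.

(* Q-special sequences: integer families indexed by S_Q (values off S_Q irrelevant). *)
Definition Q_special (R : realType) (q : nat -> nat) (F : nat * nat * nat -> int) : Prop :=
  forall a b c, S_Q q (a, b, c) ->
    (c = 1%N -> F (a, b, c) = 0) /\
    ((1 < c)%N ->
       let r := (F (a, b, c))%:~R / (q (phi_Q q (a, b, c)))%:R : R in
       (c.-1)%:R / a%:R - 1 / (2 * a%:R ^+ 2) <= r /\
       r <= (c.-1)%:R / a%:R + 1 / (2 * a%:R ^+ 2)).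

Definition E_F (q : nat -> nat) (F : nat * nat * nat -> int) (n : nat) : int :=
  F (phi_Q_inv q n).

Definition x_F (R : realType) (q : nat -> nat) (F : nat * nat * nat -> int) : R :=
  limn (fun N : nat =>
    \sum_(1 <= n < N) ((E_F q F n)%:~R / (\prod_(1 <= k < n.+1) q k)%:R) : R).

Definition Theta_Q (R : realType) (q : nat -> nat) : set R :=
  [set x | exists F, Q_special R q F /\ x = x_F R q F].

Definition nowhere_dense (T : topologicalType) (A : set T) : Prop :=
  interior (closure A) = set0.
Arguments Q_special R q F : clear implicits.
Arguments x_F R q F : clear implicits.
Arguments Theta_Q R q : clear implicits.

From HB Require Import structures.
From mathcomp Require Import all_boot all_order all_algebra.
From mathcomp Require Import all_classical all_reals all_analysis.
Import numFieldTopology.Exports numFieldNormedType.Exports.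
From mathcomp Require Import zify ring lra.
Import Order.TTheory GRing.Theory Num.Theory.
Set Implicit Arguments. Unset Strict Implicit. Unset Printing Implicit Defensive.

(* The digit at position L_a + 1 of every x_F is forced to be 0 (it is indexed
   by (a+1, 1, 1)).  With P = q_1 ... q_{L_a}, the remaining digits contribute
   at most 1/(q_{L_a+1} P) <= 1/(2P), so every point of Theta_Q lies in the
   lower half of a cell [D/P, (D+1)/P].  The points (D + 3/4)/P therefore have a
   neighbourhood missing Theta_Q, and since P >= L_a >= a they are arbitrarily
   dense. *)

Section Blocks.
Variable q : nat -> nat.

Lemma LL_succ i : LL q i.+1 = LL q i + i.+1 * ll q i.+1.
Proof. by case: i. Qed.

Lemma ll_gt0 i : 0 < ll q i.+1.
Proof. by case: i => [|i] /=; rewrite /lnext ?leq_maxr. Qed.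

Lemma LL_ltnS i : LL q i < LL q i.+1.
Proof. by rewrite LL_succ; have := ll_gt0 i; nia. Qed.

Lemma LL_mono : {mono LL q : i j / i <= j}.
Proof. exact/leq_mono/(homo_ltn ltn_trans LL_ltnS). Qed.

Lemma leq_LL i : i <= LL q i.
Proof. by elim: i => [//|i IH]; have := LL_ltnS i; lia. Qed.

Lemma exists_LL_block n : 0 < n -> exists a, LL q a < n <= LL q a.+1.
Proof.
move=> n_gt0; suff : forall i, n <= LL q i -> exists a, LL q a < n <= LL q a.+1.
  by apply; apply: leq_LL.
elim=> [/= |i IH] n_le; first lia.
by case: (leqP n (LL q i)) => [/IH //|lt_n]; exists i; rewrite lt_n.
Qed.

Lemma phi_Q_surj n : 0 < n -> exists t, S_Q q t /\ phi_Q q t = n.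
Proof.
move=> /exists_LL_block [a /andP [lo hi]]; rewrite LL_succ in hi.
set r := n - LL q a - 1.
have r_lt : r < ll q a.+1 * a.+1 by rewrite /r; lia.
exists (a.+1, (r %/ a.+1).+1, (r %% a.+1).+1); split.
  by split => //; rewrite ?ltn_divLR ?ltn_mod.
by rewrite /phi_Q /=; have := divn_eq r a.+1; rewrite /r; lia.
Qed.

Lemma phi_Q_block a b c : S_Q q (a, b, c) ->
  LL q a.-1 < phi_Q q (a, b, c) <= LL q a.
Proof.
case: a => [[//]|a] [_ b_gt0 b_le c_gt0 c_le]; rewrite /phi_Q LL_succ succnK.
have : b.-1 * a.+1 <= (ll q a.+1).-1 * a.+1 by apply: leq_mul => //; lia.
by have := ll_gt0 a; nia.
Qed.

(* Position L_m + 1 is the first one of block m + 1, so it has c = 1. *)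
Lemma phi_Q_LL_succ m a b c : S_Q q (a, b, c) ->
  phi_Q q (a, b, c) = (LL q m).+1 -> c = 1.
Proof.
move=> Sabc phi_eq; have := phi_Q_block Sabc; rewrite phi_eq.
case: Sabc => a_gt0 _ _ c_gt0 _ /andP [lo hi].
have a_eq : a.-1 = m.
  have le_m : a.-1 <= m by rewrite -LL_mono -ltnS.
  have lt_m : m < a by rewrite -(leqW_mono LL_mono).
  lia.
by move: phi_eq; rewrite /phi_Q a_eq; set v := b.-1 * a; lia.
Qed.

Lemma phi_Q_invP n : 0 < n ->
  S_Q q (phi_Q_inv q n) /\ phi_Q q (phi_Q_inv q n) = n.
Proof. by move=> /phi_Q_surj ex_t; apply: (xgetPex (0, 0, 0) ex_t). Qed.

End Blocks.

Local Open Scope ring_scope.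

Lemma Q_special_window (R : realFieldType) (a c : nat) : (1 < c <= a)%N ->
  0 < (c.-1)%:R / a%:R - 1 / (2 * a%:R ^+ 2) :> R /\
  (c.-1)%:R / a%:R + 1 / (2 * a%:R ^+ 2) < 1 :> R.
Proof.
move=> /andP [c_gt1 c_le].
have c1 : 1 <= (c.-1)%:R :> R by rewrite ler1n; lia.
have ca : (c.-1)%:R + 1 <= a%:R :> R by rewrite natr1 ler_nat; lia.
have a_gt0 : 0 < a%:R :> R by lra.
have a2_gt0 : 0 < 2 * a%:R ^+ 2 :> R by rewrite expr2; nra.
have -> : (c.-1)%:R / a%:R - 1 / (2 * a%:R ^+ 2) =
  (2 * a%:R * (c.-1)%:R - 1) / (2 * a%:R ^+ 2) :> R by field; rewrite gt_eqF.
have -> : (c.-1)%:R / a%:R + 1 / (2 * a%:R ^+ 2) =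
  (2 * a%:R * (c.-1)%:R + 1) / (2 * a%:R ^+ 2) :> R by field; rewrite gt_eqF.
split; first by rewrite divr_gt0 //; nra.
by rewrite ltr_pdivrMr // mul1r expr2; nra.
Qed.

Lemma int_ratio_bounds (R : realFieldType) (f : int) (Q : nat) : (0 < Q)%N ->
  0 < (f%:~R / Q%:R : R) < 1 -> 0 < f < Q%:Z.
Proof.
move=> Q_gt0; have Q_gt0' : 0 < Q%:R :> R by rewrite ltr0n.
rewrite pmulr_lgt0 ?invr_gt0 // ltr_pdivrMr // mul1r.
by rewrite -(ltr0z R) -(ltr_int R).
Qed.

Lemma E_F_digit (R : realType) q F n : basic_seq q -> Q_special R q F ->
  (0 < n)%N -> 0 <= E_F q F n < (q n)%:Z.
Proof.
move=> q_basic QF n_gt0; have q_ge2 := q_basic n n_gt0.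
have [] := phi_Q_invP q n_gt0; rewrite /E_F.
case: (phi_Q_inv q n) => [[a b] c] Sabc phi_eq.
have [c_eq1 c_gt1] := QF a b c Sabc; case: Sabc => _ _ _ c_gt0 c_le.
case: (ltnP 1 c) => c_cmp.
  have [lo hi] := c_gt1 c_cmp; rewrite phi_eq in lo hi.
  have [w_gt0 w_lt1] := Q_special_window R (introT andP (conj c_cmp c_le)).
  have /andP [f_gt0 f_lt] : 0 < F (a, b, c) < (q n)%:Z.
    apply: (@int_ratio_bounds R _ (q n)); first lia.
    by apply/andP; split; lra.
  by rewrite ltW.
by rewrite c_eq1 ?ltz_nat //; lia.
Qed.

Lemma E_F_LL_succ (R : realType) q F m :
  Q_special R q F -> E_F q F (LL q m).+1 = 0.
Proof.
move=> QF; have [] := phi_Q_invP q (ltn0Sn (LL q m)); rewrite /E_F.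
case: (phi_Q_inv q _) => [[a b] c] Sabc /(phi_Q_LL_succ Sabc) c_eq1.
by have [-> //] := QF a b c Sabc.
Qed.

Definition qprod (q : nat -> nat) (n : nat) : nat := \prod_(1 <= k < n.+1) q k.

Lemma qprod_succ q n : qprod q n.+1 = (qprod q n * q n.+1)%N.
Proof. by rewrite /qprod big_nat_recr. Qed.

Lemma qprod_gt q n : basic_seq q -> (n < qprod q n)%N.
Proof.
move=> q_basic; elim: n => [|n IH]; first by rewrite /qprod big_geq.
by rewrite qprod_succ; have := q_basic _ (ltn0Sn n); nia.
Qed.

Definition lower_half_cells (R : realType) (P : R) : set R :=
  [set x | exists D : int, D%:~R <= x * P <= D%:~R + 1 / 2].

Section CantorSeries.
Variables (R : realType) (q : nat -> nat) (e : nat -> int).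
Hypothesis q_basic : basic_seq q.
Hypothesis e_digit : forall n, (0 < n)%N -> 0 <= e n < (q n)%:Z.

Local Notation P n := ((qprod q n)%:R : R).

(* Spelled out rather than via [P n], so that [x_F] is literally
   [limn (cantor_sum (E_F q F))]; the two elaborations of [%:R] differ. *)
Definition cantor_sum (N : nat) : R :=
  \sum_(1 <= n < N) (e n)%:~R / (qprod q n)%:R.

Lemma qprod_gt0 n : 0 < P n.
Proof. by rewrite ltr0n; have := qprod_gt n q_basic; lia. Qed.

Lemma cantor_term_le n : (e n.+1)%:~R / P n.+1 <= 1 / P n - 1 / P n.+1.
Proof.
have /andP [_ e_lt] := e_digit (ltn0Sn n).
have e_le : (e n.+1)%:~R <= (q n.+1)%:R - 1 :> R.
  by move: e_lt; rewrite -lezD1 -(ler_int R) intrD /=; lra.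
have P_gt0 := qprod_gt0 n.
have q_gt0 : 0 < (q n.+1)%:R :> R.
  by rewrite ltr0n; have := q_basic (ltn0Sn n); lia.
have -> : 1 / P n - 1 / P n.+1 = ((q n.+1)%:R - 1) / P n.+1.
  by rewrite qprod_succ natrM; field; rewrite !gt_eqF.
by rewrite ler_pM2r // invr_gt0 qprod_gt0.
Qed.

Lemma cantor_sumS N : (0 < N)%N ->
  cantor_sum N.+1 = cantor_sum N + (e N)%:~R / P N.
Proof. by move=> N_gt0; rewrite /cantor_sum big_nat_recr. Qed.

Lemma cantor_sum_tail m j :
  cantor_sum (m + j).+1 + 1 / P (m + j) <= cantor_sum m.+1 + 1 / P m.
Proof.
elim: j => [|j IH]; first by rewrite addn0.
by rewrite addnS cantor_sumS //; have := cantor_term_le (m + j); lra.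
Qed.

Lemma cantor_sum_nondecreasing : nondecreasing_seq cantor_sum.
Proof.
apply/nondecreasing_seqP => -[|N]; first by rewrite /cantor_sum !big_geq.
have /andP [e_ge0 _] := e_digit (ltn0Sn N).
by rewrite (@cantor_sumS N.+1) // lerDl divr_ge0 ?ler0z // ltW // qprod_gt0.
Qed.

Lemma cantor_sum_cvg : cvgn cantor_sum.
Proof.
apply: nondecreasing_is_cvgn; first exact: cantor_sum_nondecreasing.
exists 1 => _ [[|N] _ <-]; first by rewrite /cantor_sum big_geq.
have := cantor_sum_tail 0 N; rewrite add0n.
have -> : cantor_sum 1 = 0 by rewrite /cantor_sum big_geq.
have -> : P 0 = 1 by rewrite /qprod big_geq.
have : 0 <= 1 / P N by rewrite divr_ge0 ?ltW ?qprod_gt0.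
lra.
Qed.

Lemma limn_cantor_sum_le m : limn cantor_sum <= cantor_sum m.+1 + 1 / P m.
Proof.
apply: limr_le; first exact: cantor_sum_cvg.
near=> N; have N_ge : (m.+1 <= N)%N by near: N; exact: nbhs_infty_ge.
have := cantor_sum_tail m (N - m.+1); rewrite -addSn subnKC //.
have : 0 <= 1 / P (m + (N - m.+1)) by rewrite divr_ge0 ?ltW ?qprod_gt0.
lra.
Unshelve. all: by end_near.
Qed.

Lemma cantor_sum_scaled_int m : exists D : int, cantor_sum m.+1 * P m = D%:~R.
Proof.
elim: m => [|m [D HD]]; first by exists 0; rewrite /cantor_sum big_geq ?mul0r.
exists (D * (q m.+1)%:Z + e m.+1).
rewrite cantor_sumS // intrD intrM -HD.
by rewrite mulrDl divfK ?gt_eqF ?qprod_gt0 // qprod_succ natrM mulrA.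
Qed.

(* After a zero digit at position m + 1 the tail is at most 1/P (m+1), which is
   at most 1/(2 P m) because q_(m+1) >= 2. *)
Lemma limn_cantor_sum_half_cell m : e m.+1 = 0 ->
  lower_half_cells (P m) (limn cantor_sum).
Proof.
move=> e_eq0; have [D HD] := cantor_sum_scaled_int m; exists D.
have P_gt0 := qprod_gt0 m.
have lo := nondecreasing_cvgn_le cantor_sum_nondecreasing cantor_sum_cvg m.+1.
have hi := limn_cantor_sum_le m.+1.
have skip : cantor_sum m.+2 = cantor_sum m.+1.
  by rewrite cantor_sumS // e_eq0 mul0r addr0.
have q_ge2 : 2 <= (q m.+1)%:R :> R by rewrite ler_nat; apply: q_basic.
have half : 1 / P m.+1 * P m <= 1 / 2.
  rewrite qprod_succ natrM mul1r invfM mulrAC mulVf ?gt_eqF // mul1r.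
  by rewrite ler_pdivrMr ?(lt_le_trans _ q_ge2) //; lra.
rewrite skip in hi; rewrite -HD; apply/andP; split; first by rewrite ler_pM2r.
have : limn cantor_sum * P m <= (cantor_sum m.+1 + 1 / P m.+1) * P m.
  by rewrite ler_pM2r.
by rewrite mulrDl; lra.
Qed.

End CantorSeries.

Lemma half_cell_far (R : realType) (D D0 : int) (u : R) :
  D%:~R <= u <= D%:~R + 1 / 2 -> 1 / 4 <= `|D0%:~R + 3 / 4 - u|.
Proof.
move=> /andP [Du uD]; rewrite ler_normr; apply/orP.
have [D_le|D_gt] := leP D D0.
- left; have : D%:~R <= D0%:~R :> R by rewrite ler_int.
  lra.
- right; have : (D0 + 1 <= D)%R by rewrite lezD1.
  by rewrite -(ler_int R) intrD; lra.
Qed.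

Lemma nowhere_dense_lower_half_cells (R : realType) (A : set R) :
  (forall n : nat,
     exists2 P : R, n%:R <= P & (A `<=` lower_half_cells P)%classic) ->
  nowhere_dense A.
Proof.
move=> fine; apply/seteqP; split=> // x /nbhs_ballP [e e_gt0 xeA].
have [P boundP AP] := fine (Num.bound (1 / e)).
have e_inv_ge0 : 0 <= 1 / e by rewrite divr_ge0 ?ltW.
have e_bound : 1 / e < (Num.bound (1 / e))%:R by apply: archi_boundP.
have P_gt0 : 0 < P by apply: le_lt_trans e_inv_ge0 (lt_le_trans e_bound boundP).
have eP : 1 < e * P by rewrite -ltr_pdivrMl // mulr1 -div1r; lra.
set D0 := Num.floor (x * P).
set y := (D0%:~R + 3 / 4) / P.
have yP : y * P = D0%:~R + 3 / 4 by rewrite /y divfK ?gt_eqF.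
have scale u : `|u| * P = `|u * P| by rewrite normrM (gtr0_norm P_gt0).
have xy : ball x e y.
  rewrite -ball_normE /= -(ltr_pM2r P_gt0) scale mulrBl yP ltr_norml.
  have := floor_le (x * P); have := floorD1_gt (x * P); rewrite intrD -/D0.
  by move=> h1 h2; apply/andP; split; lra.
have quarter_gt0 : 0 < 1 / (4 * P) by rewrite divr_gt0 ?mulr_gt0.
have [z [/AP [D /(half_cell_far D0)]]] :=
  xeA y xy _ (nbhsx_ballx y _ quarter_gt0).
rewrite -yP -mulrBl -scale -ball_normE /= -(ltr_pM2r P_gt0).
have -> : 1 / (4 * P) * P = 1 / 4 by field; rewrite gt_eqF.
lra.
Qed.

Theorem mainTheorem4 (R : realType) (q : nat -> nat) :
  basic_seq q -> infinite_in_limit q -> nowhere_dense (Theta_Q R q).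
Proof.
move=> q_basic _; apply: nowhere_dense_lower_half_cells => n.
exists (qprod q (LL q n))%:R.
  by rewrite ler_nat (leq_trans (leq_LL q n)) // ltnW // qprod_gt.
move=> _ [F [QF ->]].
have F_digit k : (0 < k)%N -> 0 <= E_F q F k < (q k)%:Z.
  exact: E_F_digit q_basic QF.
exact (limn_cantor_sum_half_cell R q_basic F_digit (E_F_LL_succ n QF)).
Qed.
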